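(* Let $U$ be a finite nonempty set, $R$ an equivalence relation on $U$, and $M(R)$ the support matroid induced by $R$. For every $X\subseteq U$, $X$ is a closed set of $M(R)$ if and only if $X$ is an $R$-precise set.
   Context: For $x\in U$, $RN(x)=\{y\in U\mid xRy\}$; $R_{*}(X)=\{x\in U\mid RN(x)\subseteq X\}$ and $R^{*}(X)=\{x\in U\mid RN(x)\cap X\neq\emptyset\}$. A set $X\subseteq U$ is $R$-precise if $R^{*}(X)=R_{*}(X)$, and $R$-rough otherwise. Let $\mathbf{S}(R)=\{X\subseteq U\mid R^{*}(X)=U\}$. The support matroid $M(R)=(U,\mathbf{I}(R))$ is the matroid on $U$ whose independent sets $\mathbf{I}(R)$ are the subsets of inclusion-minimal members of $\mathbf{S}(R)$. For a matroid $(U,\mathbf{I})$, the rank is $r(X)=\max\{|I|\mid I\subseteq X, I\in\mathbf{I}\}$, the closure is $cl(X)=\{e\in U\mid r(X)=r(X\cup\{e\})\}$, and $X$ is closed if $cl(X)=X$. *)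

From mathcomp Require Import all_boot.
Set Implicit Arguments. Unset Strict Implicit. Unset Printing Implicit Defensive.

Section Support.
Variables (U : finType) (R : rel U).

Definition RN (x : U) : {set U} := [set y | R x y].
Definition lowerR (X : {set U}) : {set U} := [set x | RN x \subset X].
Definition upperR (X : {set U}) : {set U} := [set x | RN x :&: X != set0].
Definition R_precise (X : {set U}) : bool := upperR X == lowerR X.

Definition inS (X : {set U}) : bool := upperR X == [set: U].
Definition indep (I : {set U}) : bool :=
  [exists M : {set U}, minset inS M && (I \subset M)].

Definition mrank (X : {set U}) : nat :=
  \max_(I : {set U} | (I \subset X) && indep I) #|I|.
Definition mclosure (X : {set U}) : {set U} :=
  [set e | mrank X == mrank (e |: X)].
Definition mclosed (X : {set U}) : bool := mclosure X == X.
End Support.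

From mathcomp Require Import all_boot.

(* The independent sets of M(R) are the partial transversals of the partition
   into R-classes: a minimal set meeting every class meets each class exactly
   once.  Hence r(X) is the number of classes meeting X, and adding e to X
   keeps the rank iff the class of e already meets X, i.e. cl(X) = R^*(X).
   So X is closed iff it is a union of classes, which is R-precision. *)

Section EquivalenceSupportMatroid.
Variables (U : finType) (R : rel U).
Hypotheses (Rrefl : reflexive R) (Rsym : symmetric R) (Rtrans : transitive R).

Lemma RN_refl x : x \in RN R x.
Proof. by rewrite inE. Qed.

Lemma RN_eqP x y : reflect (RN R x = RN R y) (R x y).
Proof.
apply: (iffP idP) => [Rxy | Exy]; last by have := RN_refl y; rewrite -Exy inE.
apply/setP => z; rewrite !inE; apply/idP/idP; last exact: Rtrans.
by apply: Rtrans; rewrite Rsym.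
Qed.

Lemma RN_meet {x : U} {X : {set U}} : x \in X -> RN R x :&: X != set0.
Proof. by move=> xX; apply/set0Pn; exists x; rewrite inE RN_refl. Qed.

Lemma upperR_meet x (X : {set U}) :
  (x \in upperR R X) = (RN R x \in RN R @: X).
Proof.
rewrite inE; apply/set0Pn/imsetP => [[y] | [y yX /RN_eqP Rxy]].
  by rewrite !inE => /andP[/RN_eqP Exy yX]; exists y.
by exists y; rewrite !inE Rxy.
Qed.

Lemma inSP (M : {set U}) :
  reflect (forall x, exists2 y, y \in M & R x y) (inS R M).
Proof.
apply: (iffP eqP) => [SM x | SM].
  have := in_setT x; rewrite -SM inE => /set0Pn[y].
  by rewrite !inE => /andP[Rxy yM]; exists y.
apply/setP => x; rewrite !inE; have [y yM Rxy] := SM x.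
by apply/set0Pn; exists y; rewrite !inE Rxy.
Qed.

(* Dropping one of two related points of a support set leaves a support set. *)
Lemma minset_inS_injective {M : {set U}} :
  minset (inS R) M -> {in M &, injective (RN R)}.
Proof.
move=> /minsetP[/inSP SM minM] x y xM yM /RN_eqP Rxy.
apply/eqP/negPn/negP => nxy.
have /minM/(_ (subsetDl M [set x]))/setP/(_ x) : inS R (M :\ x).
  apply/inSP => z; have [m mM Rzm] := SM z.
  have [mx | nmx] := eqVneq m x; last by exists m; rewrite // !inE nmx.
  by exists y; [rewrite !inE eq_sym nxy | rewrite mx in Rzm; apply: Rtrans Rxy].
by rewrite !inE eqxx xM.
Qed.

Lemma injective_minset (M : {set U}) :
  inS R M -> {in M &, injective (RN R)} -> minset (inS R) M.
Proof.
move=> SM injM; apply/minsetP; split=> // B /inSP SB sBM.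
apply/eqP; rewrite eqEsubset sBM; apply/subsetP => x xM.
have [b bB /RN_eqP Exb] := SB x.
by rewrite (injM x b xM (subsetP sBM b bB) Exb).
Qed.

(* Defaults to [x] itself when the class of [x] misses [X]. *)
Definition rep (X : {set U}) (x : U) : U :=
  if [pick y in RN R x :&: X] is Some y then y else x.

Lemma RN_rep (X : {set U}) x : RN R (rep X x) = RN R x.
Proof.
apply/esym/RN_eqP; rewrite /rep; case: pickP => [y | _]; last exact: Rrefl.
by rewrite !inE => /andP[].
Qed.

Lemma rep_mem (X : {set U}) x : RN R x :&: X != set0 -> rep X x \in X.
Proof.
rewrite /rep; case: pickP => [y | none /set0Pn[y]]; last by rewrite none.
by rewrite inE => /andP[].
Qed.

Lemma rep_eq {X : {set U}} {x y : U} :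
  RN R x :&: X != set0 -> RN R x = RN R y -> rep X x = rep X y.
Proof.
move=> meet Exy; rewrite /rep Exy; case: pickP => // none.
by move: meet; rewrite Exy => /set0Pn[z]; rewrite none.
Qed.

Lemma rep_injective (X : {set U}) : {in rep X @: X &, injective (RN R)}.
Proof.
move=> _ _ /imsetP[x xX ->] /imsetP[y yX ->]; rewrite !RN_rep.
exact/rep_eq/RN_meet.
Qed.

Lemma indepP (I : {set U}) : reflect {in I &, injective (RN R)} (indep R I).
Proof.
apply: (iffP existsP) => [[M /andP[minM sIM]] | injI].
  by apply: sub_in2 (minset_inS_injective minM); apply/subsetP.
(* Complete [I] by one point in each class that [I] does not meet. *)
pose M := [set rep I (rep setT x) | x : U].
exists M; apply/andP; split.
  apply: injective_minset.
    apply/inSP => x; exists (rep I (rep setT x)); first exact: imset_f.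
    by apply/RN_eqP; rewrite !RN_rep.
  move=> _ _ /imsetP[x _ ->] /imsetP[y _ ->]; rewrite !RN_rep => Exy.
  by rewrite (rep_eq (RN_meet (in_setT x)) Exy).
apply/subsetP => x xI; apply/imsetP; exists x => //.
apply: injI => //; last by rewrite !RN_rep.
by apply: rep_mem; rewrite RN_rep; apply: RN_meet.
Qed.

Lemma mrankE (X : {set U}) : mrank R X = #|RN R @: X|.
Proof.
apply/eqP; rewrite eqn_leq; apply/andP; split.
  apply/bigmax_leqP => I /andP[sIX /indepP injI].
  by rewrite -(card_in_imset injI); apply/subset_leq_card/imsetS.
have sIX : rep X @: X \subset X.
  by apply/subsetP => _ /imsetP[x xX ->]; apply/rep_mem/RN_meet.
have -> : RN R @: X = RN R @: (rep X @: X).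
  by rewrite -imset_comp; apply: eq_imset => x; rewrite /= RN_rep.
rewrite (card_in_imset (@rep_injective X)).
apply: (leq_bigmax_cond (F := fun I : {set U} => #|I|)).
by rewrite sIX; apply/indepP/rep_injective.
Qed.

Lemma mclosureE (X : {set U}) : mclosure R X = upperR R X.
Proof.
apply/setP => e; rewrite inE !mrankE imsetU1 cardsU1 upperR_meet.
case: (RN R e \in RN R @: X); first by rewrite eqxx.
by rewrite add1n eqn_leq ltnn andbF.
Qed.

Lemma precise_upperR (X : {set U}) : R_precise R X = (upperR R X == X).
Proof.
have sXup : X \subset upperR R X.
  by apply/subsetP => x xX; rewrite inE RN_meet.
have slowX : lowerR R X \subset X.
  by apply/subsetP => x; rewrite inE => /subsetP; apply; apply: RN_refl.
apply/eqP/eqP => [Eup | upX].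
  by apply/eqP; rewrite eqEsubset sXup Eup slowX.
apply/eqP; rewrite upX eqEsubset slowX andbT; apply/subsetP => x xX.
rewrite inE; apply/subsetP => y; rewrite inE => Rxy.
by rewrite -upX inE; apply/set0Pn; exists x; rewrite !inE Rsym Rxy xX.
Qed.

Lemma mclosed_precise (X : {set U}) : mclosed R X = R_precise R X.
Proof. by rewrite /mclosed mclosureE precise_upperR. Qed.

End EquivalenceSupportMatroid.

Theorem corollary4 (U : finType) (R : rel U)
  (hU : 0 < #|U|)
  (Rrefl : reflexive R) (Rsym : symmetric R) (Rtrans : transitive R) :
  forall X : {set U}, mclosed R X <-> R_precise R X.
Proof. by move=> X; rewrite mclosed_precise. Qed.
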